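(* Let $q\in\mathbb{C}$ with $0<|q|<1$. Then: (i) for every integer $n\geq 1$, \[ \sum_{m=1}^{2n}(-1)^m q^{\frac{m(m-1)}{2}-mn} \;=\; 0; \] (ii) for every integer $n$ and every integer $r\geq 0$, \[ \sum_{m=1}^{\infty}\sum_{s=-r}^{r}(-1)^m q^{\frac{m(m-1)}{2}-m(n+s)}(1-q^m) \;=\; \sum_{m=1}^{\infty}\sum_{s=-r}^{r}(-1)^m q^{\frac{m(m-1)}{2}-m(-n+s)}(1-q^m). \]
   Context: In (ii) the inner sum runs over all integers $s$ with $-r\le s\le r$. *)

From Stdlib Require Import Reals ZArith.
From Coquelicot Require Import Coquelicot.
Open Scope R_scope.

Definition zpow (q : C) (z : Z) : C :=
  match z with
  | Z0 => 1%C
  | Zpos p => pow_n q (Pos.to_nat p)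
  | Zneg p => Cinv (pow_n q (Pos.to_nat p))
  end.

(* exponent m(m-1)/2 - m*k (m(m-1) is even, so the division is exact) *)
Definition expo (m : nat) (k : Z) : Z :=
  ((Z.of_nat m * (Z.of_nat m - 1)) / 2 - Z.of_nat m * k)%Z.

Definition term1 (q : C) (k : Z) (m : nat) : C :=
  Cmult (pow_n (Copp 1%C) m) (zpow q (expo m k)).

Definition inner (q : C) (n : Z) (r : nat) (m : nat) : C :=
  sum_n_m (G := C_AbelianMonoid)
    (fun k : nat =>
       Cmult (term1 q (n + (Z.of_nat k - Z.of_nat r))%Z m)
             (Cminus 1%C (pow_n q m)))
    0 (2 * r).

(* Write t_k(m) = (-1)^m q^(m(m-1)/2 - mk) and S(k) = sum_(m>=0) t_k(m).
   (i): m |-> 2n+1-m preserves the exponent of t_n and flips the sign, so the terms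
   cancel in pairs.
   (ii): as q^m t_k(m) = t_(k-1)(m), the sum over s of t_(n+s)(m) (1 - q^m) telescopes
   to t_(n+r)(m) - t_(n-r-1)(m).  Moreover S(k) + S(-k-1) = 1: for k >= 0 the terms
   m <= 2k of S(k) sum to 1 by (i), and t_k(2k+1+j) = - t_(-k-1)(j).  So both sides
   of (ii) equal S(r+n) + S(r-n) - 1, the terms m = 0 being zero. *)

From Stdlib Require Import Reals ZArith Lia Lra.
From Coquelicot Require Import Coquelicot.
Open Scope R_scope.

Ltac C_ring :=
  match goal with |- ?a = ?b => change (@eq C a b) end;
  unfold minus, plus, opp, zero; simpl; ring.

Lemma sum_n_m_telescope {G : AbelianGroup} (c : nat -> G) (N : nat) :
  sum_n_m (fun i => minus (c (S i)) (c i)) 0 N = minus (c (S N)) (c O).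
Proof.
  induction N as [|N IHN].
  - now rewrite sum_n_n.
  - rewrite sum_n_Sm, IHN by lia. unfold minus.
    rewrite plus_comm, <- plus_assoc, (plus_assoc (opp _)), plus_opp_l, plus_zero_l.
    reflexivity.
Qed.

Lemma sum_n_m_reflect_opp {G : AbelianGroup} (g : nat -> G) (n : nat) :
  (forall m, (1 <= m <= 2 * n)%nat -> g (2 * n + 1 - m)%nat = opp (g m)) ->
  sum_n_m g 1 (2 * n) = zero.
Proof.
  intros Hg.
  assert (Hwin : forall k, (k <= n)%nat -> sum_n_m g (n + 1 - k) (n + k) = zero).
  { induction k as [|k IHk]; intros Hk.
    - now rewrite sum_n_m_zero by lia.
    - replace (n + S k)%nat with (S (n + k)) by lia.
      rewrite sum_Sn_m, sum_n_Sm by lia.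
      replace (S (n + 1 - S k)) with (n + 1 - k)%nat by lia.
      replace (S (n + k)) with (2 * n + 1 - (n + 1 - S k))%nat by lia.
      rewrite IHk, Hg, plus_zero_l, plus_opp_r by lia. reflexivity. }
  specialize (Hwin n (le_n n)).
  now replace (n + 1 - n)%nat with 1%nat in Hwin by lia;
    replace (n + n)%nat with (2 * n)%nat in Hwin by lia.
Qed.

Lemma is_series_lim_unique {K : AbsRing} {V : NormedModule K} (a : nat -> V) (l1 l2 : V) :
  is_series a l1 -> is_series a l2 -> l1 = l2.
Proof. apply filterlim_locally_unique. Qed.

Lemma pow_le_pow_le_1 (x : R) (a b : nat) : 0 <= x <= 1 -> (a <= b)%nat -> x ^ b <= x ^ a.
Proof.
  intros Hx Hab. replace b with (a + (b - a))%nat by lia. rewrite pow_add.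
  rewrite <- (Rmult_1_r (x ^ a)) at 2.
  apply Rmult_le_compat_l; [now apply pow_le|].
  rewrite <- (pow1 (b - a)). now apply pow_incr.
Qed.

Lemma expo_double (m : nat) (k : Z) :
  (2 * expo m k = Z.of_nat m * (Z.of_nat m - 1) - 2 * Z.of_nat m * k)%Z.
Proof.
  unfold expo. rewrite Z.mul_sub_distr_l, Z.mul_assoc. f_equal.
  destruct (Z.Even_or_Odd (Z.of_nat m)) as [[y ->]|[y ->]].
  - replace (2 * y * (2 * y - 1))%Z with (y * (2 * y - 1) * 2)%Z by ring.
    rewrite Z.div_mul by lia. ring.
  - replace ((2 * y + 1) * (2 * y + 1 - 1))%Z with ((2 * y + 1) * y * 2)%Z by ring.
    rewrite Z.div_mul by lia. ring.
Qed.

Lemma expo_reflect (n m : nat) : (m <= 2 * n + 1)%nat ->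
  expo (2 * n + 1 - m) (Z.of_nat n) = expo m (Z.of_nat n).
Proof.
  intros Hm. apply (Z.mul_cancel_l _ _ 2); [lia|].
  rewrite !expo_double, Nat2Z.inj_sub, Nat2Z.inj_add, Nat2Z.inj_mul by lia.
  simpl Z.of_nat. ring.
Qed.

Lemma expo_shift (n j : nat) :
  expo (2 * n + 1 + j) (Z.of_nat n) = expo j (- Z.of_nat n - 1)%Z.
Proof.
  apply (Z.mul_cancel_l _ _ 2); [lia|].
  rewrite !expo_double, !Nat2Z.inj_add, Nat2Z.inj_mul. simpl Z.of_nat. ring.
Qed.

Lemma expo_pred (m : nat) (k : Z) : expo m (k - 1) = (expo m k + Z.of_nat m)%Z.
Proof. unfold expo. ring. Qed.

Lemma expo_ge_index (m : nat) (k : Z) :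
  (2 * k + 3 <= Z.of_nat m)%Z -> (Z.of_nat m <= expo m k)%Z.
Proof. intros Hm. pose proof (expo_double m k). nia. Qed.

Lemma pow_n_Cpow (x : C) (n : nat) : pow_n (K := C_Ring) x n = Cpow x n.
Proof. induction n as [|n IHn]; [reflexivity|]. simpl. now rewrite IHn. Qed.

Lemma Cpow_neg1_double (k : nat) : Cpow (Copp 1) (2 * k) = 1.
Proof.
  rewrite Cpow_mult_r. replace (Cpow (Copp 1) 2) with (RtoC 1) by (simpl; ring).
  apply Cpow_1_l.
Qed.

Lemma Cpow_neg1_odd_sum (a b k : nat) : (a + b = 2 * k + 1)%nat ->
  Cpow (Copp 1) a = Copp (Cpow (Copp 1) b).
Proof.
  intros Hab.
  assert (Hbb : Cmult (Cpow (Copp 1) b) (Cpow (Copp 1) b) = 1).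
  { rewrite <- Cpow_add_r. replace (b + b)%nat with (2 * b)%nat by lia.
    apply Cpow_neg1_double. }
  assert (Hsum : Cmult (Cpow (Copp 1) a) (Cpow (Copp 1) b) = Copp 1).
  { rewrite <- Cpow_add_r, Hab, Nat.add_1_r, Cpow_S, Cpow_neg1_double. ring. }
  transitivity (Cmult (Cmult (Cpow (Copp 1) a) (Cpow (Copp 1) b)) (Cpow (Copp 1) b)).
  - rewrite <- Cmult_assoc, Hbb. ring.
  - rewrite Hsum. ring.
Qed.

Lemma zpow_nonneg (q : C) (z : Z) : (0 <= z)%Z -> zpow q z = Cpow q (Z.to_nat z).
Proof. destruct z; intros; try lia; simpl; try rewrite pow_n_Cpow; reflexivity. Qed.

Lemma zpow_neg (q : C) (z : Z) : (z < 0)%Z -> zpow q z = Cinv (Cpow q (Z.to_nat (- z))).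
Proof. destruct z; intros; try lia. simpl. now rewrite pow_n_Cpow. Qed.

Lemma zpow_succ (q : C) (z : Z) : q <> 0 -> zpow q (z + 1) = Cmult (zpow q z) q.
Proof.
  intros Hq. destruct (Z_lt_le_dec z 0) as [Hz|Hz].
  - destruct (Z.eq_dec z (-1)) as [->|Hz1].
    + rewrite (zpow_neg q (-1)) by lia. simpl. field. exact Hq.
    + rewrite !zpow_neg by lia.
      replace (Z.to_nat (- z)) with (S (Z.to_nat (- (z + 1)))) by lia.
      rewrite Cpow_S. field. split; [apply Cpow_nz|]; exact Hq.
  - rewrite !zpow_nonneg by lia.
    replace (Z.to_nat (z + 1)) with (S (Z.to_nat z)) by lia.
    rewrite Cpow_S. ring.
Qed.

Lemma zpow_add_nat (q : C) (z : Z) (m : nat) : q <> 0 ->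
  zpow q (z + Z.of_nat m) = Cmult (zpow q z) (Cpow q m).
Proof.
  intros Hq. induction m as [|m IHm].
  - rewrite Z.add_0_r. simpl. ring.
  - rewrite Nat2Z.inj_succ, <- Z.add_1_r, Z.add_assoc, zpow_succ, IHm, Cpow_S by exact Hq.
    ring.
Qed.

Lemma term1E (q : C) (k : Z) (m : nat) :
  term1 q k m = Cmult (Cpow (Copp 1) m) (zpow q (expo m k)).
Proof. unfold term1. now rewrite pow_n_Cpow. Qed.

Lemma term1_0 (q : C) (k : Z) : term1 q k 0 = 1.
Proof. rewrite term1E. unfold expo. simpl. ring. Qed.

Lemma term1_pred (q : C) (k : Z) (m : nat) : q <> 0 ->
  term1 q (k - 1) m = Cmult (term1 q k m) (Cpow q m).
Proof. intros Hq. rewrite !term1E, expo_pred, zpow_add_nat by exact Hq. ring. Qed.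

Lemma term1_reflect (q : C) (n m : nat) : (m <= 2 * n + 1)%nat ->
  term1 q (Z.of_nat n) (2 * n + 1 - m) = Copp (term1 q (Z.of_nat n) m).
Proof.
  intros Hm. rewrite !term1E, expo_reflect, (Cpow_neg1_odd_sum _ m n) by lia. ring.
Qed.

Lemma term1_shift (q : C) (n j : nat) :
  term1 q (Z.of_nat n) (2 * n + 1 + j) = Copp (term1 q (- Z.of_nat n - 1) j).
Proof.
  rewrite !term1E, expo_shift, !Cpow_add_r, Cpow_neg1_double, Cpow_1_r. ring.
Qed.

Lemma sum_term1_reflect (q : C) (n : nat) :
  sum_n_m (G := C_AbelianMonoid) (term1 q (Z.of_nat n)) 1 (2 * n) = RtoC 0.
Proof.
  apply (sum_n_m_reflect_opp (G := C_AbelianGroup)). intros m Hm.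
  apply term1_reflect. lia.
Qed.

Lemma sum_term1_init (q : C) (n : nat) :
  sum_n (G := C_AbelianMonoid) (term1 q (Z.of_nat n)) (2 * n) = RtoC 1.
Proof.
  unfold sum_n. rewrite sum_Sn_m, term1_0, sum_term1_reflect by lia. C_ring.
Qed.

Lemma inner_telescope (q : C) (n : Z) (r m : nat) : q <> 0 ->
  inner q n r m = Cminus (term1 q (n + Z.of_nat r) m) (term1 q (n - Z.of_nat r - 1) m).
Proof.
  intros Hq. set (c i := term1 q (n - Z.of_nat r - 1 + Z.of_nat i) m).
  transitivity (minus (c (S (2 * r))) (c O)).
  - rewrite <- sum_n_m_telescope. unfold inner.
    apply sum_n_m_ext_loc. intros i _. unfold c.
    replace (n - Z.of_nat r - 1 + Z.of_nat i)%Z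
      with (n + (Z.of_nat i - Z.of_nat r) - 1)%Z by lia.
    replace (n - Z.of_nat r - 1 + Z.of_nat (S i))%Z
      with (n + (Z.of_nat i - Z.of_nat r))%Z by lia.
    rewrite term1_pred, pow_n_Cpow by exact Hq. C_ring.
  - unfold c. rewrite Z.add_0_r.
    replace (n - Z.of_nat r - 1 + Z.of_nat (S (2 * r)))%Z with (n + Z.of_nat r)%Z by lia.
    reflexivity.
Qed.

Lemma inner_0 (q : C) (n : Z) (r : nat) : q <> 0 -> inner q n r 0 = 0.
Proof. intros Hq. rewrite inner_telescope, !term1_0 by exact Hq. ring. Qed.

Section Series.

Variable q : C.
Hypothesis q_neq0 : q <> 0.
Hypothesis q_lt1 : Cmod q < 1.

Lemma ex_series_term1 (k : Z) : ex_series (V := C_NormedModule) (term1 q k).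
Proof.
  set (N := Z.to_nat (2 * Z.abs k + 3)).
  apply (ex_series_incr_n _ N).
  apply (ex_series_le (V := C_CompleteNormedModule) _ (fun j => Cmod q ^ j)).
  - intros j. change (Cmod (term1 q k (N + j)) <= Cmod q ^ j).
    assert (Hexpo : (Z.of_nat (N + j) <= expo (N + j) k)%Z) by (apply expo_ge_index; lia).
    rewrite term1E, Cmod_mult, Cmod_pow, Cmod_opp, Cmod_1, pow1, Rmult_1_l,
      zpow_nonneg, Cmod_pow by lia.
    apply pow_le_pow_le_1; [split; [apply Cmod_ge_0 | lra] | lia].
  - apply ex_series_geom. rewrite Rabs_pos_eq; [exact q_lt1 | apply Cmod_ge_0].
Qed.

Lemma is_series_term1_compl_nat (n : nat) (A : C) :
  is_series (V := C_NormedModule) (term1 q (Z.of_nat n)) A ->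
  is_series (V := C_NormedModule) (term1 q (- Z.of_nat n - 1)) (Cminus 1 A).
Proof.
  intros HA.
  assert (Htail : is_series (V := C_NormedModule)
                    (fun j => term1 q (Z.of_nat n) (2 * n + 1 + j)) (Cminus A 1)).
  { apply is_series_incr_n; [lia|].
    rewrite Nat.add_1_r, Nat.pred_succ, sum_term1_init.
    replace (plus _ _) with A by C_ring. exact HA. }
  replace (Cminus 1 A) with (Copp (Cminus A 1)) by ring.
  apply (is_series_ext (fun j => Copp (term1 q (Z.of_nat n) (2 * n + 1 + j)))).
  - intros j. rewrite term1_shift. C_ring.
  - exact (is_series_opp _ _ Htail).
Qed.

Lemma is_series_term1_compl (k : Z) (A : C) :
  is_series (V := C_NormedModule) (term1 q k) A ->
  is_series (V := C_NormedModule) (term1 q (- k - 1)) (Cminus 1 A).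
Proof.
  intros HA. destruct (Z_le_dec 0 k) as [Hk|Hk].
  - replace k with (Z.of_nat (Z.to_nat k)) in HA |- * by lia.
    now apply is_series_term1_compl_nat.
  - set (k' := Z.to_nat (- k - 1)).
    destruct (ex_series_term1 (Z.of_nat k')) as [B HB]; change C in B.
    assert (HA' := is_series_term1_compl_nat k' B HB).
    replace (- Z.of_nat k' - 1)%Z with k in HA' by lia.
    rewrite (is_series_lim_unique _ _ _ HA HA').
    replace (- k - 1)%Z with (Z.of_nat k') by lia.
    replace (Cminus 1 (Cminus 1 B)) with B by ring. exact HB.
Qed.

Lemma is_series_inner (n : Z) (r : nat) (A B : C) :
  is_series (V := C_NormedModule) (term1 q (Z.of_nat r + n)) A ->
  is_series (V := C_NormedModule) (term1 q (Z.of_nat r - n)) B ->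
  is_series (V := C_NormedModule) (inner q n r) (Cminus (Cplus A B) 1).
Proof.
  intros HA HB.
  apply (is_series_ext (fun m => Cminus (term1 q (Z.of_nat r + n) m)
                                        (term1 q (- (Z.of_nat r - n) - 1) m))).
  - intros m. rewrite inner_telescope by exact q_neq0.
    rewrite Z.add_comm.
    now replace (n - Z.of_nat r - 1)%Z with (- (Z.of_nat r - n) - 1)%Z by lia.
  - replace (Cminus (Cplus A B) 1) with (Cminus A (Cminus 1 B)) by C_ring.
    exact (is_series_minus _ _ _ _ HA (is_series_term1_compl _ _ HB)).
Qed.

End Series.

Theorem lemma2 (q : C) (hq0 : 0 < Cmod q) (hq1 : Cmod q < 1) :
  (forall n : nat, (1 <= n)%nat ->
     sum_n_m (G := C_AbelianMonoid) (term1 q (Z.of_nat n)) 1 (2 * n) = RtoC 0)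
  /\
  (forall (n : Z) (r : nat),
     exists l : C,
       is_series (V := C_NormedModule) (fun j : nat => inner q n r (S j)) l /\
       is_series (V := C_NormedModule) (fun j : nat => inner q (- n)%Z r (S j)) l).
Proof.
  assert (Hq : q <> 0) by (intros ->; rewrite Cmod_0 in hq0; lra).
  split; [intros n _; apply sum_term1_reflect|].
  intros n r.
  destruct (ex_series_term1 q hq1 (Z.of_nat r + n)) as [A HA]; change C in A.
  destruct (ex_series_term1 q hq1 (Z.of_nat r - n)) as [B HB]; change C in B.
  exists (Cminus (Cplus A B) 1).
  split; apply is_series_incr_1; rewrite inner_0 by exact Hq;
    replace (plus _ _) with (Cminus (Cplus A B) 1) by C_ring.
  - exact (is_series_inner q Hq hq1 n r A B HA HB).
  - replace (Cminus (Cplus A B) 1) with (Cminus (Cplus B A) 1) by ring.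
    apply is_series_inner; [exact Hq | exact hq1 | |].
    + now rewrite Z.add_opp_r.
    + now rewrite Z.sub_opp_r.
Qed.
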